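(* Let $A\in\mathbb{R}^{n\times n}$, $B\in\mathbb{R}^{n\times m}$, $C\in\mathbb{R}^{q\times n}$, and let $\tilde C\in\mathbb{R}^{q_m\times n}$ consist of a subset of the rows of $C$. Suppose the sequences $g_k\in\mathbb{R}^{q\times m}$, $\tilde g_k\in\mathbb{R}^{q_m\times m}$ satisfy $g_k=CA^{k-1}B$ and $\tilde g_k=\tilde CA^{k-1}B$ for all $k\ge 1$. If $(A,\tilde C)$ is an observable pair, then there exists a positive integer $p$ such that for all positive integers $r,p_f$, $$\mathrm{Null}\big(T_1^{p,r}(\{\tilde g_k\})\big)\subseteq \mathrm{Null}\big(T_{p+1}^{p_f,r}(\{g_k\})\big).$$
   Context: $(A,\tilde C)$ is an observable pair if the matrix obtained by stacking $\tilde C,\tilde CA,\dots,\tilde CA^{n-1}$ vertically has full column rank. For a sequence of matrices $\{h_k\}$ and positive integers $j,a,b$, $T_j^{a,b}(\{h_k\})$ denotes the $a\times b$ block matrix whose $(\mu,\nu)$ block ($1\le\mu\le a$, $1\le\nu\le b$) is $h_{j+a-\mu+\nu-1}$; so its first block row is $(h_{j+a-1},\dots,h_{j+a+b-2})$ and its last block row is $(h_j,\dots,h_{j+b-1})$. *)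

From mathcomp Require Import all_boot all_order all_algebra.
From mathcomp Require Import reals.
Set Implicit Arguments. Unset Strict Implicit. Unset Printing Implicit Defensive.
Import Order.TTheory GRing.Theory Num.Theory.
Local Open Scope ring_scope.

(* Block Toeplitz matrix T_j^{a,b}({h_k}): a x b block matrix whose
   (mu,nu) block (1-based) is h_{j+a-mu+nu-1}.  With 0-based block indices
   mu0 = mu-1, nu0 = nu-1 this is h_{j + (a - (mu0+1)) + nu0}. *)
Definition block_toeplitz (R : Type) (q m : nat) (h : nat -> 'M[R]_(q, m))
  (j a b : nat) : 'M[R]_(\sum_(mu < a) q, \sum_(nu < b) m) :=
  \mxblock_(mu < a, nu < b) h (j + (a - mu.+1) + nu)%N.

Definition obsv_mx (R : pzRingType) (n qm : nat) (A : 'M[R]_n) (Ct : 'M[R]_(qm, n))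
  : 'M[R]_(\sum_(i < n) qm, n) :=
  \mxcol_(i < n) (Ct *m A ^+ i).

Definition observable (F : fieldType) (n qm : nat) (A : 'M[F]_n) (Ct : 'M[F]_(qm, n)) :=
  \rank (obsv_mx A Ct) = n.

Definition nullsp (F : pzRingType) (r c : nat) (M : 'M[F]_(r, c)) : pred 'cV[F]_c :=
  fun x => M *m x == 0.

From mathcomp Require Import all_boot all_order all_algebra.
From mathcomp Require Import reals.
Set Implicit Arguments. Unset Strict Implicit. Unset Printing Implicit Defensive.
Import Order.TTheory GRing.Theory Num.Theory.
Local Open Scope ring_scope.

(* For Markov parameters h_k = C A^(k-1) B, the block Toeplitz matrix
   T_j^{a,r} factors as a block column of matrices C A^(j-1+a-mu) times the
   extended controllability matrix W_r = [B, AB, ..., A^(r-1) B].  With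
   p = n+1 the first factor of T_1^{p,r}({g~_k}) is the observability matrix
   of (A, C~) upside down, hence injective, so T_1^{p,r}({g~_k}) x = 0 forces
   W_r x = 0, which in turn kills T_{p+1}^{pf,r}({g_k}) x. *)

Lemma mxcol_eq0 (R : pzRingType) (p k : nat) (p_ : 'I_p -> nat)
    (X_ : forall i, 'M[R]_(p_ i, k)) :
  \mxcol_i X_ i = 0 -> forall i, X_ i = 0.
Proof. by rewrite -(mxcol0 k) => /eq_mxcolP. Qed.

Lemma mxcol_mulmx_eq0 (R : pzRingType) (p k l c : nat) (p_ : 'I_p -> nat)
    (X_ : forall i, 'M[R]_(p_ i, k)) (W : 'M[R]_(k, l)) (x : 'M[R]_(l, c)) :
  W *m x = 0 -> \mxcol_i (X_ i *m W) *m x = 0.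
Proof.
move=> Wx0; rewrite mxcol_mul -(mxcol0 c); apply/eq_mxcolP => i.
by rewrite -mulmxA Wx0 mulmx0.
Qed.

Lemma observable_mulmx_eq0 (F : fieldType) (n qm k : nat)
    (A : 'M[F]_n) (Ct : 'M[F]_(qm, n)) (v : 'M[F]_(n, k)) :
  observable A Ct -> (forall i : 'I_n, Ct *m A ^+ i *m v = 0) -> v = 0.
Proof.
move=> obsA Cv0; have obs_free : row_free (obsv_mx A Ct)^T.
  by rewrite /row_free mxrank_tr obsA.
apply: trmx_inj; apply: (row_free_inj obs_free).
rewrite trmx0 mul0mx -trmx_mul /obsv_mx mxcol_mul.
by rewrite (eq_mxcol _ (B_ := fun => 0)) ?mxcol0 ?trmx0.
Qed.

Lemma observable_mxcol_mulmx_eq0 (F : fieldType) (n qm l c : nat)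
    (A : 'M[F]_n) (Ct : 'M[F]_(qm, n)) (W : 'M[F]_(n, l)) (x : 'M[F]_(l, c)) :
    observable A Ct ->
    \mxcol_(mu < n.+1) (Ct *m A ^+ (n.+1 - mu.+1) *m W) *m x = 0 ->
  W *m x = 0.
Proof.
rewrite mxcol_mul => obsA /mxcol_eq0 Wx0.
apply: (observable_mulmx_eq0 obsA) => i.
have ni_lt : (n - i < n.+1)%N by rewrite ltnS leq_subr.
have := Wx0 (inord (n - i)); rewrite inordK // subSS subKn 1?ltnW //.
by rewrite -mulmxA.
Qed.

Definition ctrb_mx (R : pzRingType) (n m r : nat) (A : 'M[R]_n) (B : 'M[R]_(n, m))
  : 'M[R]_(n, \sum_(nu < r) m) :=
  \mxrow_(nu < r) (A ^+ nu *m B).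

Lemma block_toeplitz_markov (R : pzRingType) (n m q : nat)
    (A : 'M[R]_n) (B : 'M[R]_(n, m)) (C : 'M[R]_(q, n)) (h : nat -> 'M[R]_(q, m)) :
    (forall k, (1 <= k)%N -> h k = C *m A ^+ k.-1 *m B) ->
  forall j a r, (1 <= j)%N ->
  block_toeplitz h j a r
    = \mxcol_(mu < a) (C *m A ^+ (j.-1 + (a - mu.+1)) *m ctrb_mx r A B).
Proof.
move=> hE [//|j] a r _; rewrite /block_toeplitz mxblockEv; apply: eq_mxcol => mu.
rewrite /ctrb_mx mul_mxrow; apply: eq_mxrow => nu.
by rewrite hE ?addSn //= exprD -mulmxE !mulmxA.
Qed.

Theorem theorem3 (R : realType) (n m q qm : nat)
  (A : 'M[R]_n) (B : 'M[R]_(n, m)) (C : 'M[R]_(q, n)) (Ct : 'M[R]_(qm, n))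
  (g : nat -> 'M[R]_(q, m)) (gt : nat -> 'M[R]_(qm, m)) :
  (exists f : 'I_qm -> 'I_q, injective f /\ Ct = rowsub f C) ->
  (forall k : nat, (1 <= k)%N -> g k = C *m A ^+ k.-1 *m B) ->
  (forall k : nat, (1 <= k)%N -> gt k = Ct *m A ^+ k.-1 *m B) ->
  observable A Ct ->
  exists p : nat, (0 < p)%N /\
    forall r pf : nat, (0 < r)%N -> (0 < pf)%N ->
      {subset nullsp (block_toeplitz gt 1 p r)
         <= nullsp (block_toeplitz g p.+1 pf r)}.
Proof.
move=> _ gE gtE obsA; exists n.+1; split=> // r pf _ _ x.
rewrite /nullsp /in_mem /= (block_toeplitz_markov gtE) // (block_toeplitz_markov gE) //.
move=> /eqP /(observable_mxcol_mulmx_eq0 obsA) Wx0.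
by apply/eqP; apply: mxcol_mulmx_eq0.
Qed.
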